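(* Let $\lambda_1\neq\lambda_2$ be real numbers, let $$J_3=\begin{pmatrix}\lambda_1&1&0\\0&\lambda_1&0\\0&0&\lambda_2\end{pmatrix},$$ and $h>0$. If $\lambda_1=0$, set $\psi=1$, $\phi=h$, $\theta=\dfrac{e^{\lambda_2h}-\lambda_2h-1}{\lambda_2h(e^{\lambda_2h}-1)}$. If $\lambda_1\neq 0$, set $$T_1=\frac{2he^{\lambda_1h}\lambda_1+\dfrac{(\lambda_1+\lambda_2)(e^{\lambda_2h}-e^{\lambda_1h})}{\lambda_1-\lambda_2}-(e^{\lambda_1h}-e^{\lambda_2h})}{2\Big[he^{\lambda_1h}\lambda_1^2-\dfrac{\lambda_1\lambda_2(e^{\lambda_1h}-e^{\lambda_2h})}{\lambda_1-\lambda_2}\Big]},$$ $$\psi=1+\frac{\lambda_1(e^{\lambda_2h}-1)-\lambda_2(e^{\lambda_1h}-1)+\lambda_1\lambda_2(e^{\lambda_1h}-e^{\lambda_2h})T_1}{\lambda_1-\lambda_2},$$ $$\phi=\frac{e^{\lambda_1h}-e^{\lambda_2h}+\big[\lambda_2(e^{\lambda_2h}-1)-\lambda_1(e^{\lambda_1h}-1)\big]T_1}{\lambda_1-\lambda_2},\qquad \theta=\frac{T_1}{\phi}.$$ Then (whenever these expressions are defined and $(1-\phi\lambda_1\theta)(1-\phi\lambda_2\theta)\neq 0$) the difference scheme $$\frac{\mathbf{x}_{k+1}-\psi\mathbf{x}_k}{\phi}=J_3\big[\theta\mathbf{x}_{k+1}+(1-\theta)\mathbf{x}_k\big]$$ is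 exact for the system $\mathbf{x}'=J_3\mathbf{x}$.
   Context: A one-step difference scheme with step size $h>0$ for $\mathbf{x}'=M\mathbf{x}$ is called exact if for every initial vector $\mathbf{x}_0$ the sequence $(\mathbf{x}_k)$ it generates satisfies $\mathbf{x}_k=\mathbf{x}(kh)$ for all $k\ge 0$, where $\mathbf{x}(t)$ solves $\mathbf{x}'=M\mathbf{x}$, $\mathbf{x}(0)=\mathbf{x}_0$. *)

From HB Require Import structures.
From mathcomp Require Import all_boot all_order all_algebra.
From mathcomp Require Import all_classical all_reals all_analysis.
Set Implicit Arguments. Unset Strict Implicit. Unset Printing Implicit Defensive.
Import Order.TTheory GRing.Theory Num.Theory.
Import numFieldNormedType.Exports.
Local Open Scope ring_scope.

Section Defs.
Variable R : realType.

Definition solves_linear_ode (n : nat) (M : 'M[R]_n) (X : R -> 'cV[R]_n) : Prop :=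
  forall t : R, is_derive t 1 X (M *m X t).

Definition exact_scheme (n : nat) (M : 'M[R]_n) (h : R)
    (step : 'cV[R]_n -> 'cV[R]_n -> Prop) : Prop :=
  forall (x0 : 'cV[R]_n) (x : nat -> 'cV[R]_n) (X : R -> 'cV[R]_n),
    x 0%N = x0 -> (forall k, step (x k) (x k.+1)) ->
    solves_linear_ode M X -> X 0 = x0 ->
    forall k : nat, x k = X (k%:R * h).

Definition theta_step (n : nat) (M : 'M[R]_n) (psi phi theta : R)
    (xk xk1 : 'cV[R]_n) : Prop :=
  phi^-1 *: (xk1 - psi *: xk) = M *m (theta *: xk1 + (1 - theta) *: xk).

Definition J3 (l1 l2 : R) : 'M[R]_3 :=
  \matrix_(i < 3, j < 3)
    (if i == j then (if (val i < 2)%N then l1 else l2)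
     else if ((val i == 0) && (val j == 1))%N then 1 else 0).

Definition T1_num (l1 l2 h : R) : R :=
  2 * h * expR (l1 * h) * l1
  + (l1 + l2) * (expR (l2 * h) - expR (l1 * h)) / (l1 - l2)
  - (expR (l1 * h) - expR (l2 * h)).

Definition T1_den (l1 l2 h : R) : R :=
  2 * (h * expR (l1 * h) * l1 ^+ 2
       - l1 * l2 * (expR (l1 * h) - expR (l2 * h)) / (l1 - l2)).

Definition T1 (l1 l2 h : R) : R := T1_num l1 l2 h / T1_den l1 l2 h.

Definition psi3 (l1 l2 h : R) : R :=
  if l1 == 0 then 1 else
  1 + (l1 * (expR (l2 * h) - 1) - l2 * (expR (l1 * h) - 1)
       + l1 * l2 * (expR (l1 * h) - expR (l2 * h)) * T1 l1 l2 h) / (l1 - l2).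

Definition phi3 (l1 l2 h : R) : R :=
  if l1 == 0 then h else
  (expR (l1 * h) - expR (l2 * h)
   + (l2 * (expR (l2 * h) - 1) - l1 * (expR (l1 * h) - 1)) * T1 l1 l2 h)
  / (l1 - l2).

Definition theta3 (l1 l2 h : R) : R :=
  if l1 == 0 then
    (expR (l2 * h) - l2 * h - 1) / (l2 * h * (expR (l2 * h) - 1))
  else T1 l1 l2 h / phi3 l1 l2 h.

End Defs.

From HB Require Import structures.
From mathcomp Require Import all_boot all_order all_algebra.
From mathcomp Require Import all_classical all_reals all_analysis.
From mathcomp Require Import ring.
Import Order.TTheory GRing.Theory Num.Theory.
Import numFieldNormedType.Exports.
Local Open Scope ring_scope.

(* The solution of x' = J3 x is explicit: x_3 = c_3 e^{l2 t}, x_2 = c_2 e^{l1 t}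
   and x_1 = (c_1 + c_2 t) e^{l1 t}.  Hence the scheme is exact as soon as one
   step reproduces the growth factor e^{l2 h} on the eigenvector e_3, the factor
   e^{l1 h} on e_2, and the shear h e^{l1 h} of the Jordan block.  With
   T = phi theta these are three scalar conditions; the first two are linear in
   (psi, phi) and are solved by psi3 and phi3 for every T, while the third is
   linear in T and is exactly the equation defining T1 (or theta3 when l1 = 0). *)

Lemma forced_exp_ode_solution {R : realType} {f : R -> R} (c k : R) :
  (forall t : R, is_derive t 1 f (c * f t + k * expR (c * t))) ->
  forall t, f t = expR (c * t) * (f 0 + k * t).
Proof.
move=> df t.
pose g s := expR (- (c * s)) * f s - k * s.
have dg (s : R) : is_derive s 1 g 0.
  have dE : is_derive s 1 (fun s => expR (- (c * s))) (expR (- (c * s)) * - c).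
    have dlin : is_derive s 1 (fun s => - (c * s)) (- c).
      have -> : (fun s => - (c * s)) = (cst (- c) * id) :> (R -> R).
        by apply/funext => y /=; rewrite mulNr.
      by apply: is_derive_eq; rewrite scaler0 addr0 [_%:A]mulr1.
    exact: is_derive1_comp (is_derive_expR _) dlin.
  have -> : g = (fun s => expR (- (c * s))) * f - (cst k * id) by [].
  apply: is_derive_eq.
  have eK : expR (- (c * s)) * expR (c * s) = 1 by rewrite -expRD addNr expR0.
  rewrite /GRing.scale /= mulrDr [_ * (k * _)]mulrCA eK.
  ring.
have := is_derive_0_is_cst t 0 dg.
rewrite /g mulr0 oppr0 expR0 mul1r mulr0 subr0.
move=> /(congr1 (fun v => expR (c * t) * (v + k * t))).
by rewrite subrK mulrA -expRD addrN expR0 mul1r.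
Qed.

Lemma is_derive_mx_entry {R : realType} {m n : nat} {X : R -> 'M[R]_(m, n)}
    {t : R} {D : 'M[R]_(m, n)} (i : 'I_m) (j : 'I_n) :
  is_derive t 1 X D -> is_derive t 1 (fun s => X s i j) (D i j).
Proof.
move=> [dX <-].
apply: DeriveDef; first exact: (derivable_mxP X t 1).1 dX i j.
by rewrite derive_mx // mxE.
Qed.

Lemma exact_scheme_of_flow {R : realType} {n : nat} (M : 'M[R]_n) (h : R)
    (step : 'cV[R]_n -> 'cV[R]_n -> Prop) :
  (forall X, solves_linear_ode M X -> forall t y, step (X t) y -> y = X (t + h)) ->
  exact_scheme M h step.
Proof.
move=> flow x0 x X x_0 xS solX X0; elim=> [|k IHk]; first by rewrite mul0r X0.
have := xS k; rewrite IHk => /(flow X solX) ->.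
by rewrite -[in RHS]addn1 natrD mulrDl mul1r.
Qed.

Definition i0 : 'I_3 := @Ordinal 3 0 isT.
Definition i1 : 'I_3 := @Ordinal 3 1 isT.
Definition i2 : 'I_3 := @Ordinal 3 2 isT.

Lemma col3_eq {R : Type} (u v : 'cV[R]_3) :
  u i0 0 = v i0 0 -> u i1 0 = v i1 0 -> u i2 0 = v i2 0 -> u = v.
Proof.
move=> e0 e1 e2; apply/matrixP => i j; rewrite (ord1 j).
case: i => [[|[|[|m]]] lt_i3] //.
- by rewrite (_ : Ordinal _ = i0) //; apply: val_inj.
- by rewrite (_ : Ordinal _ = i1) //; apply: val_inj.
- by rewrite (_ : Ordinal _ = i2) //; apply: val_inj.
Qed.

Section J3Flow.
Context {R : realType} (l1 l2 : R).

Lemma J3_mulmx_entries (w : 'cV[R]_3) :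
  [/\ (J3 l1 l2 *m w) i0 0 = l1 * w i0 0 + w i1 0,
      (J3 l1 l2 *m w) i1 0 = l1 * w i1 0 &
      (J3 l1 l2 *m w) i2 0 = l2 * w i2 0].
Proof.
split; rewrite mxE !big_ord_recr big_ord0 /= !mxE /=.
all: rewrite (_ : widen_ord _ (widen_ord _ ord_max) = i0); last by apply: val_inj.
all: rewrite (_ : widen_ord _ ord_max = i1); last by apply: val_inj.
all: rewrite (_ : ord_max = i2); last by apply: val_inj.
all: ring.
Qed.

Lemma J3_ode_closed_form {X : R -> 'cV[R]_3} :
  solves_linear_ode (J3 l1 l2) X -> forall t,
  [/\ X t i0 0 = expR (l1 * t) * (X 0 i0 0 + X 0 i1 0 * t),
      X t i1 0 = expR (l1 * t) * X 0 i1 0 &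
      X t i2 0 = expR (l2 * t) * X 0 i2 0].
Proof.
move=> solX.
have dX i t := is_derive_mx_entry i 0 (solX t).
have X1 t : X t i1 0 = expR (l1 * t) * X 0 i1 0.
  suff -> : X t i1 0 = expR (l1 * t) * (X 0 i1 0 + 0 * t) by rewrite mul0r addr0.
  apply: (forced_exp_ode_solution (f := fun s => X s i1 0)) => s.
  apply: is_derive_eq (dX i1 s) _.
  by have [_ -> _] := J3_mulmx_entries (X s); rewrite mul0r addr0.
have X2 t : X t i2 0 = expR (l2 * t) * X 0 i2 0.
  suff -> : X t i2 0 = expR (l2 * t) * (X 0 i2 0 + 0 * t) by rewrite mul0r addr0.
  apply: (forced_exp_ode_solution (f := fun s => X s i2 0)) => s.
  apply: is_derive_eq (dX i2 s) _.
  by have [_ _ ->] := J3_mulmx_entries (X s); rewrite mul0r addr0.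
move=> t; split=> //.
apply: (forced_exp_ode_solution (f := fun s => X s i0 0)) => s.
apply: is_derive_eq (dX i0 s) _.
by have [-> _ _] := J3_mulmx_entries (X s); rewrite X1 [X 0 i1 0 * _]mulrC.
Qed.

Lemma J3_ode_flow {X : R -> 'cV[R]_3} :
  solves_linear_ode (J3 l1 l2) X -> forall t s,
  [/\ X (t + s) i0 0 = expR (l1 * s) * (X t i0 0 + s * X t i1 0),
      X (t + s) i1 0 = expR (l1 * s) * X t i1 0 &
      X (t + s) i2 0 = expR (l2 * s) * X t i2 0].
Proof.
move=> solX t s.
have [x0t x1t x2t] := J3_ode_closed_form solX t.
have [x0ts x1ts x2ts] := J3_ode_closed_form solX (t + s).
rewrite x0t x1t x2t x0ts x1ts x2ts !mulrDr !expRD.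
by split; ring.
Qed.

End J3Flow.

Section ThetaStepScalar.
Context {R : fieldType} {ps ph th : R}.
Hypothesis ph_neq0 : ph != 0.

Lemma theta_step_eigen {l e u v : R} :
  1 - ph * th * l != 0 ->
  ps + (ph - ph * th) * l = (1 - ph * th * l) * e ->
  ph^-1 * (u - ps * v) = l * (th * u + (1 - th) * v) -> u = e * v.
Proof.
move=> D_neq0 growth step.
have step' : u - ps * v = ph * (l * (th * u + (1 - th) * v)).
  by rewrite -step mulVKf.
apply: (mulIf D_neq0); rewrite [e * v * _]mulrAC [e * _]mulrC -growth.
apply/eqP; rewrite -subr_eq0; apply/eqP.
transitivity (u - ps * v - ph * (l * (th * u + (1 - th) * v))); first by ring.
by rewrite step' subrr.
Qed.

Lemma theta_step_jordan {l a h u0 v0 u1 v1 : R} :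
  1 - ph * th * l != 0 ->
  ps + (ph - ph * th) * l = (1 - ph * th * l) * a ->
  ph - ph * th + ph * th * a = (1 - ph * th * l) * h * a ->
  u1 = a * v1 ->
  ph^-1 * (u0 - ps * v0) = l * (th * u0 + (1 - th) * v0) + (th * u1 + (1 - th) * v1) ->
  u0 = a * (v0 + h * v1).
Proof.
move=> D_neq0 growth shear -> step.
have step' : u0 - ps * v0 =
    ph * (l * (th * u0 + (1 - th) * v0) + (th * (a * v1) + (1 - th) * v1)).
  by rewrite -step mulVKf.
apply: (mulIf D_neq0).
have -> : a * (v0 + h * v1) * (1 - ph * th * l) =
    (ps + (ph - ph * th) * l) * v0 + (ph - ph * th + ph * th * a) * v1.
  by rewrite growth shear; ring.
apply/eqP; rewrite -subr_eq0; apply/eqP.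
transitivity (u0 - ps * v0 -
  ph * (l * (th * u0 + (1 - th) * v0) + (th * (a * v1) + (1 - th) * v1))); first by ring.
by rewrite step' subrr.
Qed.

End ThetaStepScalar.

(* a = e^{l1 h} and b = e^{l2 h} are the growth factors of the exact flow over
   one step, and T stands for phi * theta. *)
Definition exactness_conditions {R : ringType} (l1 l2 h a b ps ph T : R) : Prop :=
  [/\ ps + (ph - T) * l1 = (1 - T * l1) * a,
      ps + (ph - T) * l2 = (1 - T * l2) * b &
      ph - T + T * a = (1 - T * l1) * h * a].

Lemma J3_theta_step_exact {R : realType} {l1 l2 h ps ph th : R} :
  ph != 0 -> 1 - ph * th * l1 != 0 -> 1 - ph * th * l2 != 0 ->
  exactness_conditions l1 l2 h (expR (l1 * h)) (expR (l2 * h)) ps ph (ph * th) ->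
  exact_scheme (J3 l1 l2) h (theta_step (J3 l1 l2) ps ph th).
Proof.
move=> ph_neq0 D1 D2 [growth1 growth2 shear].
apply: exact_scheme_of_flow => X solX t y; rewrite /theta_step => step.
have [X0 X1 X2] := J3_ode_flow l1 l2 solX t h.
have [J0 J1 J2] := J3_mulmx_entries l1 l2 (th *: y + (1 - th) *: X t).
have step_at (i : 'I_3) := congr1 (fun w : 'cV[R]_3 => w i 0) step.
have := step_at i0; rewrite /= J0 !mxE => step0.
have := step_at i1; rewrite /= J1 !mxE => step1.
have := step_at i2; rewrite /= J2 !mxE => step2.
have y1 := theta_step_eigen ph_neq0 D1 growth1 step1.
have y2 := theta_step_eigen ph_neq0 D2 growth2 step2.
have y0 := theta_step_jordan ph_neq0 D1 growth1 shear y1 step0.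
by apply: col3_eq; rewrite ?X0 ?X1 ?X2.
Qed.

Lemma exactness_conditions_linear {R : fieldType} (l1 l2 h a b t : R) :
  l1 != l2 ->
  t * (l1 * h * a * (l1 - l2) - l2 * (a - b)) = h * a * (l1 - l2) - (a - b) ->
  exactness_conditions l1 l2 h a b
    (1 + (l1 * (b - 1) - l2 * (a - 1) + l1 * l2 * (a - b) * t) / (l1 - l2))
    ((a - b + (l2 * (b - 1) - l1 * (a - 1)) * t) / (l1 - l2)) t.
Proof.
rewrite -subr_eq0 => d_neq0 shear_eq.
split; [by field | by field |].
apply: (mulIf d_neq0); apply/eqP; rewrite -subr_eq0; apply/eqP.
transitivity (t * (l1 * h * a * (l1 - l2) - l2 * (a - b)) -
  (h * a * (l1 - l2) - (a - b))); first by field.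
by rewrite shear_eq subrr.
Qed.

(* T1_num and T1_den are the two sides of the linear equation for T,
   both multiplied by 2 l1 / (l1 - l2). *)
Lemma T1_linear_eq {R : realType} (l1 l2 h : R) :
  l1 != 0 -> l1 != l2 -> T1_den l1 l2 h != 0 ->
  let a := expR (l1 * h) in let b := expR (l2 * h) in
  T1 l1 l2 h * (l1 * h * a * (l1 - l2) - l2 * (a - b)) = h * a * (l1 - l2) - (a - b).
Proof.
move=> l1_neq0; rewrite -subr_eq0 => d_neq0 den_neq0 a b.
have c_neq0 : 2 * l1 / (l1 - l2) != 0.
  by rewrite !mulf_neq0 ?invr_eq0 ?pnatr_eq0.
have eN : T1_num l1 l2 h = 2 * l1 / (l1 - l2) * (h * a * (l1 - l2) - (a - b)).
  by rewrite /T1_num -/a -/b; field.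
have eD : T1_den l1 l2 h = 2 * l1 / (l1 - l2) * (l1 * h * a * (l1 - l2) - l2 * (a - b)).
  by rewrite /T1_den -/a -/b; field.
by apply: (mulfI c_neq0); rewrite mulrCA -eD -eN /T1 divfK.
Qed.

Lemma theta3_exactness_conditions {R : realType} {l1 l2 h : R} :
  l1 != l2 -> 0 < h -> (l1 != 0 -> T1_den l1 l2 h != 0) -> phi3 l1 l2 h != 0 ->
  exactness_conditions l1 l2 h (expR (l1 * h)) (expR (l2 * h))
    (psi3 l1 l2 h) (phi3 l1 l2 h) (phi3 l1 l2 h * theta3 l1 l2 h).
Proof.
move=> l12 h_gt0 den_neq0 phi_neq0.
have [l1_0|l1_neq0] := eqVneq l1 0.
  rewrite /psi3 /phi3 /theta3 l1_0 eqxx mul0r expR0.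
  have l2_neq0 : l2 != 0 by rewrite eq_sym -l1_0.
  have h_neq0 : h != 0 by rewrite gt_eqF.
  have b_neq1 : expR (l2 * h) - 1 != 0.
    rewrite subr_eq0 -expR0; apply/negP => /eqP/expR_inj/eqP.
    by rewrite mulf_eq0 (negbTE l2_neq0) (negbTE h_neq0).
  by split; field; rewrite ?l2_neq0 ?h_neq0 ?b_neq1.
rewrite /theta3 (negbTE l1_neq0) [phi3 l1 l2 h * _]mulrC divfK //.
rewrite /psi3 /phi3 (negbTE l1_neq0).
exact/exactness_conditions_linear/T1_linear_eq/den_neq0.
Qed.

Theorem theorem7 (R : realType) (l1 l2 h : R) :
  l1 != l2 -> 0 < h ->
  (l1 != 0 -> T1_den l1 l2 h != 0) ->
  phi3 l1 l2 h != 0 ->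
  (1 - phi3 l1 l2 h * l1 * theta3 l1 l2 h) *
    (1 - phi3 l1 l2 h * l2 * theta3 l1 l2 h) != 0 ->
  exact_scheme (J3 l1 l2) h
    (theta_step (J3 l1 l2) (psi3 l1 l2 h) (phi3 l1 l2 h) (theta3 l1 l2 h)).
Proof.
move=> l12 h_gt0 den_neq0 phi_neq0.
rewrite mulf_eq0 negb_or (mulrAC _ l1) (mulrAC _ l2) => /andP [D1 D2].
exact: J3_theta_step_exact phi_neq0 D1 D2
  (theta3_exactness_conditions l12 h_gt0 den_neq0 phi_neq0).
Qed.
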